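(* Let $p$ be a prime and $n\ge 1$. A $C_{p^n}$-transfer system $T$ is lesser simply paired if and only if either $T$ is connected, or $T$ has exactly two connected components and the connected component of the trivial subgroup consists of the trivial subgroup alone. Consequently the number of lesser simply paired $C_{p^n}$-transfer systems is $\mathrm{Cat}(n)+\mathrm{Cat}(n-1)=\frac{(5n-1)(2n-2)!}{(n-1)!(n+1)!}$, where $\mathrm{Cat}(m)=\frac{(2m)!}{(m+1)!m!}$, and their proportion among all $C_{p^n}$-transfer systems is $\frac{5n^2+9n-2}{16n^2-4}$.
   Context: The subgroups of $C_{p^n}$ are $C_{p^i}$, $0\le i\le n$, totally ordered by inclusion. A $C_{p^n}$-transfer system is a partial order $\to$ on these subgroups refining inclusion ($K\to H$ implies $K\le H$), reflexive, transitive, and closed under restriction ($K\to H$ implies $K\cap L\to H\cap L$ for all $L$). The total number of $C_{p^n}$-transfer systems is $\mathrm{Cat}(n+1)$. Connected components are those of the underlying undirected graph. A transfer system is saturated if whenever $L\le K\le H$ and $L\to H$ is in it then $K\to H$ is in it; $\mathrm{Hull}(T)$ is the smallest saturated transfer system containing $T$; $T_c$ is the complete transfer system. A pair $(T,T')$ is compatible if $T\subseteq T'$ and for all subgroups $A,B,C$ with $B,C\le A$: if $B\to A$ is in $T$ and $B\cap C\to B$ is in $T'$ then $C\to A$ is in $T'$. $T$ is lesser simply paired if for every transfer system $T'\supseteq T$, $(T,T')$ is compatible iff $T'\in\{\mathrm{Hull}(T),T_c\}$. *)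

(* The subgroup C_{p^i} of C_{p^n} is represented by the
   index i : 'I_n.+1; inclusion is <= on indices, intersection is min. *)
From mathcomp Require Import all_boot all_order all_algebra.
Set Implicit Arguments. Unset Strict Implicit. Unset Printing Implicit Defensive.

Section TS.
Variable n : nat.
Local Notation Sub := ('I_n.+1).
Local Notation Rel := {set Sub * Sub}.

Definition capS (K L : Sub) : Sub := if K <= L then K else L.

(* (K, H) \in T  means  K -> H *)
Definition is_transfer (T : Rel) : bool :=
  [&& [forall K : Sub, forall H : Sub, ((K, H) \in T) ==> (K <= H)],
      [forall K : Sub, (K, K) \in T],
      [forall K : Sub, forall H : Sub, forall L : Sub,
         ((K, H) \in T) && ((H, L) \in T) ==> ((K, L) \in T)] &
      [forall K : Sub, forall H : Sub, forall L : Sub,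
         ((K, H) \in T) ==> ((capS K L, capS H L) \in T)]].

Definition saturated (T : Rel) : bool :=
  [forall L : Sub, forall K : Sub, forall H : Sub,
     [&& L <= K, K <= H & (L, H) \in T] ==> ((K, H) \in T)].

Definition Tc : Rel := [set x : Sub * Sub | x.1 <= x.2].

Definition is_hull (T S : Rel) : bool :=
  [&& is_transfer S, saturated S, T \subset S &
      [forall S' : Rel, [&& is_transfer S', saturated S' & T \subset S']
                          ==> (S \subset S')]].

Definition compatible (T T' : Rel) : bool :=
  (T \subset T') &&
  [forall A : Sub, forall B : Sub, forall C : Sub,
     [&& B <= A, C <= A, (B, A) \in T & (capS B C, B) \in T'] ==> ((C, A) \in T')].

Definition lesser_simply_paired (T : Rel) : bool :=
  [forall T' : Rel, (is_transfer T' && (T \subset T')) ==>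
     (compatible T T' == (is_hull T T' || (T' == Tc)))].

Definition und_edge (T : Rel) : rel Sub := fun a b => ((a, b) \in T) || ((b, a) \in T).
Definition component (T : Rel) (x : Sub) : {set Sub} := [set y | connect (und_edge T) x y].
Definition num_components (T : Rel) : nat := #|[set component T x | x : Sub]|.

Definition trivial_sub : Sub := ord0.

End TS.

Definition Cat (m : nat) : nat := (m.*2)`! %/ ((m.+1)`! * m`!).

From mathcomp Require Import all_boot all_order all_algebra.
From mathcomp Require Import zify ring.
Set Implicit Arguments. Unset Strict Implicit. Unset Printing Implicit Defensive.

(* A transfer system T is determined by the largest
   target s_i of each i, and the intervals [i, s_i] are nested; conversely every nested family
   comes from a transfer system.  Nested families of size N+1 arise from those of size N by
   prepending a new head, which may be 0 or u+1 for any cut point u; sorting them by their number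
   of cut points gives ballot numbers, and there are Cat(N) of them.

   Connected components of T are intervals, and a component is reached by T from its minimum.
   If 0 is connected to n, compatibility forces (x, n) into any compatible T', so T' is complete.
   If 0 is isolated and 1 is connected to n, a compatible T' contains every (x, n) with x > 0,
   hence is either complete or the complete system with 0 isolated, which is Hull(T).
   Otherwise let c be the least subgroup not connected to 0: adding the transfers from 0 to
   everything below c and to the component of c yields a compatible transfer system that is not
   contained in Hull(T), so lesser simple pairedness forces it to be complete, which in turn forces
   0 to be isolated and 1 to be connected to n.  In the encoding these are the families with
   s_0 = n (Cat(n) of them) or s_0 = 0 and s_1 = n (Cat(n-1) of them). *)

(** * Nested sequences and ballot numbers *)

Definition nested (N : nat) (s : seq nat) : Prop :=
  [/\ size s = N, (forall i, i < N -> i <= nth 0 s i < N) &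
      (forall i j, i < N -> i <= j -> j <= nth 0 s i -> nth 0 s j <= nth 0 s i)].

Definition is_cut (s : seq nat) (u : nat) : bool :=
  all (fun y => nth 0 s y <= u) (iota 0 u.+1).

Definition num_cuts (s : seq nat) : nat := count (is_cut s) (iota 0 (size s)).

Definition heads (s : seq nat) : seq nat :=
  0 :: [seq u.+1 | u <- [seq u <- iota 0 (size s) | is_cut s u]].

Fixpoint nested_seqs (N : nat) : seq (seq nat) :=
  if N is N'.+1 then [seq v :: map succn s | s <- nested_seqs N', v <- heads s]
  else [:: [::]].

Lemma nested_seqsS N :
  nested_seqs N.+1 = [seq v :: map succn s | s <- nested_seqs N, v <- heads s].
Proof. by []. Qed.

Lemma is_cutP s u : reflect (forall y, y <= u -> nth 0 s y <= u) (is_cut s u).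
Proof.
apply: (iffP allP) => H y.
  by move=> Hy; apply: H; rewrite mem_iota /=; lia.
by rewrite mem_iota => /andP[_ Hy]; apply: H; lia.
Qed.

Lemma heads_uniq s : uniq (heads s).
Proof.
rewrite /heads /= map_inj_uniq ?filter_uniq ?iota_uniq ?andbT //; last by move=> ? ? [].
by apply/mapP => -[].
Qed.

Lemma nested_cons N s v :
  nested N s -> v \in heads s -> nested N.+1 (v :: map succn s).
Proof.
case=> Ss Hr Hn Hv.
have {}Hv : v = 0 \/ exists2 w, w < N & is_cut s w /\ v = w.+1.
  move: Hv; rewrite inE => /orP[/eqP->|]; first by left.
  case/mapP => w; rewrite mem_filter mem_iota Ss => /andP[cw /andP[_ wN]] ->.
  by right; exists w.
split; first by rewrite /= size_map Ss.
- case=> [|i] /= Hi; first by case: Hv => [->|[w wN [_ ->]]].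
  by rewrite (nth_map 0) ?Ss; [have := Hr i; lia | lia].
- case=> [|i] [|j] /= Hi Hij Hj //; try lia.
  + case: Hv Hj => [->|[w wN [cw ->]]] // Hj.
    by rewrite (nth_map 0) ?Ss; [have := elimT (is_cutP _ _) cw j; lia | lia].
  + rewrite (nth_map 0) ?Ss in Hj; last lia.
    have := Hr i; rewrite ltnS in Hi => /(_ Hi) Hri.
    by rewrite !(nth_map 0) ?Ss; [have := Hn i j; lia | lia | lia].
Qed.

Lemma nested_uncons N v s' : nested N.+1 (v :: s') ->
  exists2 s, s' = map succn s & nested N s /\ v \in heads s.
Proof.
case=> /= [[Ss]] Hr Hn.
set s := map predn s'.
have Es : s' = map succn s.
  apply/(@eq_from_nth _ 0); rewrite /s ?size_map // => k Hk.
  rewrite (nth_map 0) ?size_map // (nth_map 0) //.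
  by move: Hk; rewrite Ss => Hk; have := Hr k.+1; rewrite /=; lia.
have Ss' : size s = N by rewrite size_map.
have ns k : k < N -> nth 0 s' k = (nth 0 s k).+1.
  by move=> Hk; rewrite Es (nth_map 0) // Ss'.
exists s => //; split.
  split => // [i Hi|i j Hi Hij Hj].
    by have := Hr i.+1 Hi; rewrite /= ns //; lia.
  have Hj' : j < N by have := Hr i.+1 Hi; rewrite /= ns //; lia.
  by have := Hn i.+1 j.+1 Hi Hij; rewrite /= !ns //; lia.
case: v Hr Hn => [|w] Hr Hn; first by rewrite inE.
rewrite inE /=; apply/mapP; exists w => //.
have := Hr 0 (ltn0Sn _); rewrite /= => Hw.
rewrite mem_filter mem_iota Ss' /=; apply/andP; split; last lia.
apply/is_cutP => y Hy; have := Hn 0 y.+1 (ltn0Sn _) (leq0n _).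
by rewrite /= ns; [move/(_ Hy); lia | lia].
Qed.

Lemma mem_nested_seqs N s : s \in nested_seqs N <-> nested N s.
Proof.
elim: N s => [|N IH] s.
  rewrite inE; split; first by move/eqP->; split.
  by case=> /size0nil ->.
split.
  by case/allpairsPdep => x [v [/IH Hx Hv ->]]; apply: nested_cons.
case: s => [[//]|v s' Hs].
have [x -> [/IH Hx Hv]] := nested_uncons Hs.
by apply/allpairsPdep; exists x, v.
Qed.

Lemma nested_seqs_uniq N : uniq (nested_seqs N).
Proof.
elim: N => [|N IH] //.
apply: allpairs_uniq_dep => // [s _|[s1 v1] [s2 v2] _ _ /= [-> E]]; first exact: heads_uniq.
by move/(inj_map succn_inj): E => ->.
Qed.

Definition ballot (N c : nat) : nat := count (fun s => num_cuts s == c) (nested_seqs N).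

Lemma count_predU_disj (T : Type) (a b : pred T) s :
  (forall x, ~~ (a x && b x)) -> count (predU a b) s = count a s + count b s.
Proof.
move=> ab; rewrite -count_predUI (@eq_count _ (predI a b) pred0) ?count_pred0 ?addn0 //.
by move=> x; apply/negbTE/ab.
Qed.

Lemma is_cut_cons0 v s : is_cut (v :: map succn s) 0 = (v == 0).
Proof. by rewrite /is_cut /= andbT leqn0. Qed.

Lemma is_cut_consS v s u : u < size s ->
  is_cut (v :: map succn s) u.+1 = (v <= u.+1) && is_cut s u.
Proof.
move=> Hu; apply/is_cutP/andP.
  move=> H; split; first exact: H 0 _.
  apply/is_cutP => y Hy; have := H y.+1; rewrite /= (nth_map 0); last lia.
  by move=> /(_ Hy).
by case=> Hv /is_cutP H [|y] //= Hy; rewrite (nth_map 0); [exact: H | lia].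
Qed.

Lemma num_cuts_cons v s : num_cuts (v :: map succn s) =
  (v == 0) + count (fun u => (v <= u.+1) && is_cut s u) (iota 0 (size s)).
Proof.
rewrite /num_cuts /= size_map is_cut_cons0; congr (_ + _).
rewrite -(addn0 1) iotaDl count_map; apply: eq_in_count => u.
by rewrite mem_iota /= => Hu; rewrite add1n is_cut_consS.
Qed.

Lemma gt0_leqS_eqV (c m : nat) : (0 < c) && (c <= m.+1) = (c == m.+1) || (0 < c) && (c <= m).
Proof. by apply/idP/idP; lia. Qed.

(* In a strictly increasing list, the number of entries above an entry is its rank counted from
   the top, so every rank [c] between [1] and the length occurs exactly once. *)
Lemma count_rank_sorted (B : seq nat) c : sorted ltn B ->
  count (fun w => count (fun u => w <= u) B == c) B = (0 < c) && (c <= size B).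
Proof.
elim: B => [|b B IH] /=; first by case: c.
move=> Hp; have Ha : all (ltn b) B by apply: order_path_min Hp; apply: ltn_trans.
have -> : count (fun u => b <= u) B = size B.
  by rewrite -count_predT; apply: eq_in_count => u /(allP Ha) /ltnW.
rewrite leqnn add1n (@eq_in_count _ _ (fun w => count (fun u => w <= u) B == c)); last first.
  by move=> w /(allP Ha) /= bw; rewrite leqNgt bw.
rewrite IH ?(path_sorted Hp) // gt0_leqS_eqV eq_sym.
by case: eqP => [->|_]; rewrite ?ltnn ?andbF.
Qed.

Lemma count_heads_num_cuts s c :
  count (fun t => num_cuts t == c) [seq v :: map succn s | v <- heads s] =
  (0 < c) && (c <= num_cuts s + 1).
Proof.
rewrite /heads /= !count_map num_cuts_cons eqxx add1n.
rewrite (_ : count _ (iota 0 (size s)) = num_cuts s) //.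
set B := [seq u <- iota 0 (size s) | is_cut s u].
rewrite (@eq_in_count _ _ (fun w => count (fun u => w <= u) B == c) B); last first.
  by move=> w _ /=; rewrite num_cuts_cons /= add0n /B count_filter.
have B_sorted : sorted ltn B.
  by apply: sorted_filter; [apply: ltn_trans | apply: iota_ltn_sorted].
rewrite count_rank_sorted // size_filter addn1 gt0_leqS_eqV eq_sym.
by case: eqP => [->|_]; rewrite ?ltnn ?andbF.
Qed.

Lemma ballotS N c :
  ballot N.+1 c = count (fun s => (0 < c) && (c <= num_cuts s + 1)) (nested_seqs N).
Proof.
rewrite /ballot nested_seqsS count_flatten -map_comp -sumn_count; congr sumn.
by apply: eq_map => s; exact: count_heads_num_cuts.
Qed.

Lemma ballot_gt N c : N < c -> ballot N c = 0.
Proof.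
move=> Nc; apply/eqP; rewrite -leqn0 leqNgt -has_count; apply/hasP => -[s].
case/mem_nested_seqs => size_s _ _ /eqP cuts_s.
have : num_cuts s <= size s by rewrite /num_cuts -[X in _ <= X](size_iota 0) count_size.
by rewrite cuts_s size_s leqNgt Nc.
Qed.

Lemma ballotS0 N : ballot N.+1 0 = 0.
Proof. by rewrite ballotS; apply/eqP; rewrite -leqn0 leqNgt -has_count; apply/hasP => -[]. Qed.

Lemma ballot_rec N c : 0 < c -> ballot N.+1 c = ballot N c.-1 + ballot N.+1 c.+1.
Proof.
case: c => // c _; rewrite !ballotS /ballot -count_predU_disj => [|s]; last first.
  by apply/negP; rewrite /=; lia.
by apply: eq_count => s /=; apply/idP/idP; lia.
Qed.

Definition binom_pred (m b : nat) : nat := if b is b'.+1 then 'C(m, b') else 0.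

Lemma binom_predS m b : binom_pred m.+1 b.+1 = binom_pred m b.+1 + binom_pred m b.
Proof. by case: b => [|b] /=; rewrite ?bin0 ?addn0 // binS addnC. Qed.

(* The ballot numbers [ballot a.+1 (a.+1 - b) = 'C(a + b, b) - 'C(a + b, b.-1)], stated without
   truncated subtraction. *)
Lemma ballot_binomial a b : b <= a ->
  ballot a.+1 (a.+1 - b) + binom_pred (a + b) b = 'C(a + b, b).
Proof.
elim: a b => [|a IHa] b Hb.
  have -> : b = 0 by lia.
  by rewrite (ballot_rec 0 (ltn0Sn 0)) (@ballot_gt 1 2).
elim: b Hb => [|b IHb] Hb.
  rewrite subn0 addn0 /= bin0 ballot_rec //= (@ballot_gt a.+2 a.+3) // !addn0.
  by have := IHa 0 (leq0n _); rewrite subn0 addn0 /= bin0 addn0.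
rewrite ballot_rec; last lia.
have -> : (a.+2 - b.+1).+1 = a.+2 - b by lia.
have IB := IHb (ltnW Hb).
rewrite (_ : a.+1 + b.+1 = (a.+1 + b).+1); last lia.
rewrite binom_predS binS.
have [ltba|eqba] : b < a \/ b = a by lia.
  have := IHa b.+1 ltba.
  rewrite (_ : (a.+2 - b.+1).-1 = a.+1 - b.+1); last lia.
  rewrite (_ : a + b.+1 = a.+1 + b); last lia.
  lia.
subst b; rewrite (_ : (a.+2 - a.+1).-1 = 0) ?ballotS0; last lia.
have : 'C(a.+1 + a, a.+1) = 'C(a.+1 + a, a).
  by rewrite -[RHS](@bin_sub _ a) ?leq_addl //; congr binomial; lia.
move: IB; rewrite /binom_pred; case: a {IHa IHb Hb} => [|a] /=; lia.
Qed.

Lemma size_nested_seqs_binomial a : size (nested_seqs a) * a.+1 = 'C(a.*2, a).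
Proof.
have := ballot_binomial (leqnn a); rewrite subSnn addnn.
have -> : ballot a.+1 1 = size (nested_seqs a).
  by rewrite ballotS -count_predT; apply: eq_count => s /=; rewrite addn1.
case: a => [|a] /=; first by rewrite muln1.
have := mul_bin_left (a.+1).*2 a.
rewrite (_ : (a.+1).*2 - a = a.+2); last lia.
set x := 'C(_, a.+1); set y := 'C(_, a); set z := size _.
nia.
Qed.

Lemma size_nested_seqs_fact a : size (nested_seqs a) * ((a.+1)`! * a`!) = (a.*2)`!.
Proof.
have a_le : a <= a.*2 by lia.
rewrite -(bin_fact a_le) -size_nested_seqs_binomial (_ : a.*2 - a = a); last lia.
by rewrite factS; ring.
Qed.

Lemma size_nested_seqs a : size (nested_seqs a) = Cat a.
Proof. by rewrite /Cat -size_nested_seqs_fact mulnK // muln_gt0 !fact_gt0. Qed.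

(** * Transfer systems on a chain *)

Section TransferSystems.
Variable n : nat.
Local Notation Sub := 'I_n.+1.
Local Notation Rel := {set Sub * Sub}.

Lemma capS_l (K L : Sub) : K <= L -> capS K L = K.
Proof. by rewrite /capS => ->. Qed.

Lemma capS_r (K L : Sub) : L <= K -> capS K L = L.
Proof. by move=> LK; rewrite /capS; case: leqP => // KL; apply: ord_inj; lia. Qed.

(* On a chain, closure under restriction amounts to closure under shrinking the target. *)
Lemma transferP (T : Rel) : is_transfer T <->
  [/\ forall K H, (K, H) \in T -> K <= H,
      forall K, (K, K) \in T,
      forall K H L : Sub, (K, H) \in T -> (H, L) \in T -> (K, L) \in T &
      forall K H L : Sub, (K, H) \in T -> K <= L -> L <= H -> (K, L) \in T].
Proof.
split.
  case/and4P => /forallP t1 /forallP t2 /forallP t3 /forallP t4; split.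
  - by move=> K H; move/forallP: (t1 K) => /(_ H) /implyP.
  - exact: t2.
  - move=> K H L KH HL; move/forallP: (t3 K) => /(_ H) /forallP /(_ L) /implyP.
    by apply; rewrite KH HL.
  - move=> K H L KH KL LH; move/forallP: (t4 K) => /(_ H) /forallP /(_ L) /implyP /(_ KH).
    by rewrite capS_l // capS_r.
case=> t1 t2 t3 t4; apply/and4P; split.
- by apply/forallP => K; apply/forallP => H; apply/implyP; apply: t1.
- exact/forallP.
- apply/forallP => K; apply/forallP => H; apply/forallP => L; apply/implyP.
  by case/andP; apply: t3.
- apply/forallP => K; apply/forallP => H; apply/forallP => L; apply/implyP => KH.
  have KleH := t1 _ _ KH.
  case: (leqP K L) => KL.
    rewrite capS_l //; case: (leqP H L) => HL; first by rewrite capS_l.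
    by rewrite capS_r ?(ltnW HL) //; apply: t4 KH KL (ltnW HL).
  by rewrite !capS_r ?(ltnW KL) ?(leq_trans (ltnW KL) KleH).
Qed.

Lemma saturatedP (T : Rel) : saturated T <->
  (forall L K H : Sub, L <= K -> K <= H -> (L, H) \in T -> (K, H) \in T).
Proof.
split => [/forallP S L K H LK KH LH | S].
  by move/forallP: (S L) => /(_ K) /forallP /(_ H) /implyP; apply; rewrite LK KH LH.
apply/forallP => L; apply/forallP => K; apply/forallP => H; apply/implyP.
by case/and3P; apply: S.
Qed.

Lemma hullP (T S : Rel) : is_hull T S <->
  [/\ is_transfer S, saturated S, T \subset S &
      forall S', is_transfer S' -> saturated S' -> T \subset S' -> S \subset S'].
Proof.
split => [/and4P[t s TS /forallP min] | [t s TS min]].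
  by split => // S' t' s' TS'; move/implyP: (min S'); apply; rewrite t' s' TS'.
apply/and4P; split => //; apply/forallP => S'; apply/implyP.
by case/and3P; apply: min.
Qed.

Lemma compatibleP (T T' : Rel) : compatible T T' <->
  (T \subset T' /\ forall A B C : Sub, B <= A -> C <= A -> (B, A) \in T ->
     (capS B C, B) \in T' -> (C, A) \in T').
Proof.
split => [/andP[TT' /forallP c] | [TT' c]].
  split => // A B C BA CA BAT BCT'.
  by move/forallP: (c A) => /(_ B) /forallP /(_ C) /implyP; apply; rewrite BA CA BAT BCT'.
apply/andP; split => //; apply/forallP => A; apply/forallP => B; apply/forallP => C.
by apply/implyP; case/and4P; apply: c.
Qed.

Lemma lesser_simply_pairedP (T : Rel) : lesser_simply_paired T <->
  (forall T', is_transfer T' -> T \subset T' ->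
     (compatible T T' <-> is_hull T T' \/ T' = Tc n)).
Proof.
split => [/forallP lsp T' t' TT' | lsp].
  move/implyP: (lsp T'); rewrite t' TT' => /(_ isT) /eqP ->.
  by split => [/orP[|/eqP]|[->|->]]; rewrite ?eqxx ?orbT; auto.
apply/forallP => T'; apply/implyP => /andP[t' TT']; apply/eqP.
apply/idP/idP => [/(lsp T' t' TT').1 [->//|->] | /orP[|/eqP] ?]; rewrite ?eqxx ?orbT //.
all: by apply/(lsp T' t' TT').2; auto.
Qed.

Lemma Tc_saturated : saturated (Tc n).
Proof. by apply/saturatedP => L K H _ KH _; rewrite inE. Qed.

Lemma compatible_intro (T T' : Rel) : is_transfer T' -> T \subset T' ->
  (forall A B C : Sub, B <= C -> C <= A -> (B, A) \in T -> (C, A) \in T') -> compatible T T'.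
Proof.
move=> /transferP[_ _ t3 _] TT' H; apply/compatibleP; split => // A B C BA CA BAT.
case: (leqP B C) => BC; first by move=> _; exact: H BC CA BAT.
by rewrite capS_r ?(ltnW BC) // => CB; apply: t3 CB (subsetP TT' _ BAT).
Qed.

Lemma compatible_above (T T' : Rel) : is_transfer T' -> compatible T T' ->
  forall A B C : Sub, B <= C -> C <= A -> (B, A) \in T -> (C, A) \in T'.
Proof.
move=> /transferP[_ t2 _ _] /compatibleP[_ c] A B C BC CA BAT.
by apply: (c A B C) => //; [apply: leq_trans CA | rewrite capS_l].
Qed.

Lemma compatible_saturated (T T' : Rel) : is_transfer T' -> saturated T' ->
  T \subset T' -> compatible T T'.
Proof.
move=> t' /saturatedP s' TT'; apply: compatible_intro => // A B C BC CA BAT.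
exact: s' BC CA (subsetP TT' _ BAT).
Qed.

End TransferSystems.

Section Connectivity.
Variable n : nat.
Local Notation Sub := 'I_n.+1.
Local Notation Rel := {set Sub * Sub}.
Variable T : Rel.
Hypothesis trT : is_transfer T.
Local Notation conn := (connect (und_edge T)).

Lemma und_edge_sym : symmetric (und_edge T).
Proof. by move=> x y; rewrite /und_edge orbC. Qed.

Lemma conn_sym (x y : Sub) : conn x y = conn y x.
Proof. exact: (sym_connect_sym und_edge_sym x y). Qed.

Lemma conn_edge (x y : Sub) : (x, y) \in T -> conn x y.
Proof. by move=> xy; apply: connect1; rewrite /und_edge xy. Qed.

Lemma conn_und_edge (x y : Sub) : und_edge T x y -> conn y x.
Proof. by move=> xy; apply: connect1; rewrite und_edge_sym. Qed.

Lemma conn_closed (A : pred Sub) :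
  (forall u v, und_edge T u v -> u \in A -> v \in A) ->
  forall x y, conn x y -> x \in A -> y \in A.
Proof.
move=> A_edge x y xy; have A_closed : closed (und_edge T) A.
  by move=> u v uv; apply/idP/idP; apply: A_edge; rewrite // und_edge_sym.
by rewrite (closed_connect A_closed xy).
Qed.

(* No edge leaves the vertices below [z] that are not connected to [z]: shrinking the target of
   such an edge would land it in the component of [z]. *)
Lemma conn_convex (x y z : Sub) : x <= z -> z <= y -> conn x y -> conn x z.
Proof.
have [t1 _ _ t4] := iffLR (transferP T) trT.
move=> xz zy xy; apply/negPn/negP => nxz.
have lt_xz : x < z by rewrite ltn_neqAle xz andbT; apply: contraNneq nxz => /val_inj ->.
pose A := [pred v : Sub | (v < z) && ~~ conn z v].
suff /andP[yz _] : y \in A by move: yz; rewrite ltnNge zy.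
apply: (conn_closed _ xy); last by rewrite inE lt_xz conn_sym nxz.
move=> u v uv /andP[uz nzu]; apply/andP; split.
  rewrite ltnNge; apply: contra nzu => zv; rewrite conn_sym; apply: conn_edge.
  by case/orP: uv => [/t4 -> //| /t1]; [exact: ltnW | lia].
by apply: contra nzu => zv; apply: connect_trans zv (conn_und_edge uv).
Qed.

Lemma mem_transfer_conn_min (x y : Sub) :
  (forall v, conn x v -> x <= v) -> conn x y -> (x, y) \in T.
Proof.
have [t1 t2 t3 t4] := iffLR (transferP T) trT.
move=> x_min xy.
suff /andP[] : y \in [pred v | conn x v && ((x, v) \in T)] by [].
apply: (conn_closed _ xy); last by rewrite inE connect0 t2.
move=> u v uv /andP[xu xuT].
have xv : conn x v by apply: connect_trans xu (connect1 uv).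
rewrite inE xv /=; case: (leqP v u) => [vu|uv'].
  exact: t4 xuT (x_min v xv) vu.
by case/orP: uv => [/(t3 _ _ _ xuT) //| /t1]; lia.
Qed.

Definition conn_rel : Rel := [set p : Sub * Sub | (p.1 <= p.2) && conn p.1 p.2].

Lemma conn_rel_transfer : is_transfer conn_rel.
Proof.
apply/transferP; split => [K H|K|K H L|K H L]; rewrite !inE /=.
- by case/andP.
- by rewrite leqnn connect0.
- by case/andP => KH cKH /andP[HL cHL]; rewrite (leq_trans KH HL) (connect_trans cKH cHL).
- by case/andP => _ cKH KL LH; rewrite KL (conn_convex KL LH cKH).
Qed.

Lemma conn_rel_saturated : saturated conn_rel.
Proof.
apply/saturatedP => L K H LK KH; rewrite !inE /= => /andP[_ cLH]; rewrite KH /=.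
have cLK := conn_convex LK KH cLH.
by apply: connect_trans cLH; rewrite conn_sym.
Qed.

Lemma sub_conn_rel : T \subset conn_rel.
Proof.
have [t1 _ _ _] := iffLR (transferP T) trT.
by apply/subsetP => -[x y] xy; rewrite inE /= t1 ?conn_edge.
Qed.

End Connectivity.

(** * Lesser simply paired transfer systems *)

Section LesserSimplyPaired.
Variable n : nat.
Hypothesis n_gt0 : 0 < n.
Local Notation Sub := 'I_n.+1.
Local Notation Rel := {set Sub * Sub}.
Local Notation conn T := (connect (und_edge T)).

Definition sub1 : Sub := inord 1.

Lemma val_sub1 : sub1 = 1 :> nat.
Proof. by rewrite /sub1 inordK. Qed.

Definition lsp_criterion (T : Rel) : Prop :=
  conn T ord0 ord_max \/ ((forall y, conn T ord0 y -> y = ord0) /\ conn T sub1 ord_max).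

Lemma sub1_conn_min (T : Rel) : (forall y, conn T ord0 y -> y = ord0) ->
  forall v, conn T sub1 v -> sub1 <= v.
Proof.
move=> iso0 v c1v; rewrite val_sub1 lt0n; apply: contraTneq c1v => v0.
have -> : v = ord0 by apply: val_inj.
by apply/negP; rewrite conn_sym => /iso0 /(congr1 (@nat_of_ord _)); rewrite val_sub1.
Qed.

Definition Tc0 : Rel := [set p : Sub * Sub | (p.1 <= p.2) && ((p.1 == ord0) ==> (p.2 == ord0))].

Lemma Tc0_transfer : is_transfer Tc0.
Proof.
apply/transferP; split => [K H|K|K H L|K H L]; rewrite !inE /=.
- by case/andP.
- by rewrite leqnn; apply/implyP.
- case/andP => KH /implyP KH0 /andP[HL /implyP HL0]; rewrite (leq_trans KH HL).
  by apply/implyP => /KH0 /HL0.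
- case/andP => _ /implyP KH0 KL LH; rewrite KL; apply/implyP => /KH0 /eqP H0.
  by apply/eqP/val_inj; move: LH; rewrite H0 /=; lia.
Qed.

Lemma Tc0_saturated : saturated Tc0.
Proof.
apply/saturatedP => L K H LK KH; rewrite !inE /= KH => /andP[_ /implyP LH0].
apply/implyP => /eqP K0; apply: LH0; apply/eqP/val_inj.
by move: LK; rewrite K0 /=; lia.
Qed.

Lemma Tc_of_edges_to_max (T' : Rel) : is_transfer T' ->
  (forall x : Sub, (x, ord_max) \in T') -> T' = Tc n.
Proof.
move=> /transferP[t1 _ _ t4] to_max; apply/setP => -[x y]; rewrite inE /=.
by apply/idP/idP => [/t1 // | xy]; apply: t4 (to_max x) xy (leq_ord y).
Qed.

Lemma edges_to_max_Tc_or_Tc0 (T' : Rel) : is_transfer T' ->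
  (forall x : Sub, 0 < x -> (x, ord_max) \in T') -> T' = Tc n \/ T' = Tc0.
Proof.
move=> trT' to_max; have [t1 t2 t3 t4] := iffLR (transferP T') trT'.
case: (boolP [exists y : Sub, ((ord0, y) \in T') && (0 < y)]).
  case/existsP => y /andP[y0T' y_gt0]; left; apply: Tc_of_edges_to_max => // x.
  have [x0|] := posnP x; last exact: to_max.
  have -> : x = ord0 by apply: val_inj.
  have T'01 : (ord0, sub1) \in T' by apply: t4 y0T' (leq0n _) _; rewrite val_sub1.
  have T'1max : (sub1, ord_max) \in T' by apply: to_max; rewrite val_sub1.
  exact: t3 T'01 T'1max.
move=> /existsPn no0; right; apply/setP => -[x y]; rewrite inE /=.
apply/idP/idP => [xyT' | /andP[xy /implyP xy0]].
  rewrite t1 //=; apply/implyP => /eqP x0; subst x; move: (no0 y); rewrite xyT' /=.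
  by rewrite lt0n negbK => /eqP y0; apply/eqP/val_inj; exact: y0.
have [x0|x_gt0] := posnP x; last by apply: t4 (to_max x x_gt0) xy (leq_ord y).
have ex : x = ord0 by apply: val_inj.
by rewrite ex in xy0 *; rewrite (eqP (xy0 (eqxx _))).
Qed.

Lemma hull_Tc0 (T : Rel) : is_transfer T -> (forall y, (ord0, y) \in T -> y = ord0) ->
  (sub1, ord_max) \in T -> is_hull T Tc0.
Proof.
move=> /transferP[t1 _ _ _] from0 T1max.
apply/hullP; split; [exact: Tc0_transfer | exact: Tc0_saturated | |].
  apply/subsetP => -[x y] xyT; rewrite inE /= t1 //=.
  by apply/implyP => /eqP x0; rewrite x0 in xyT; rewrite (from0 _ xyT).
move=> S' /transferP[_ s2 _ s4] /saturatedP sat' TS'; apply/subsetP => -[x y].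
rewrite inE /= => /andP[xy /implyP xy0].
have [x0|x_gt0] := posnP x.
  have ex : x = ord0 by apply: val_inj.
  by rewrite ex in xy0 *; rewrite (eqP (xy0 (eqxx _))).
have xmax : (x, ord_max) \in S'.
  by apply: sat' (subsetP TS' _ T1max); rewrite ?val_sub1 ?leq_ord.
exact: s4 xmax xy (leq_ord y).
Qed.

Lemma lsp_of_criterion (T : Rel) : is_transfer T -> lsp_criterion T -> lesser_simply_paired T.
Proof.
move=> trT crit; apply/lesser_simply_pairedP => T' trT' TT'; split; last first.
  case=> [/hullP[_ s' _ _]|eT']; apply: compatible_saturated => //.
  by rewrite eT'; apply: Tc_saturated.
move=> cT'; have above := compatible_above trT' cT'.
case: crit => [c0max|[iso0 c1max]].
  have T0max := @mem_transfer_conn_min _ _ trT ord0 _ (fun v _ => leq0n v) c0max.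
  right; apply: Tc_of_edges_to_max => // x.
  by apply: above T0max; [exact: leq0n | exact: leq_ord].
have T1max := mem_transfer_conn_min trT (sub1_conn_min iso0) c1max.
have to_max (x : Sub) : 0 < x -> (x, ord_max) \in T'.
  by move=> x_gt0; apply: above T1max; rewrite ?val_sub1 ?leq_ord.
have [->|->] := edges_to_max_Tc_or_Tc0 trT' to_max; [by right | left].
by apply: hull_Tc0 => // y /conn_edge; apply: iso0.
Qed.

End LesserSimplyPaired.

Section ExtensionFromTrivial.
Variable n : nat.
Local Notation Sub := 'I_n.+1.
Local Notation Rel := {set Sub * Sub}.
Local Notation conn T := (connect (und_edge T)).
Variables (T : Rel) (c : Sub).
Hypothesis trT : is_transfer T.
Hypothesis conn_lt_c : forall j : Sub, j < c -> conn T ord0 j.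
Hypothesis nconn_c : ~~ conn T ord0 c.

Definition conn_rel_ext : Rel :=
  conn_rel T :|: [set p : Sub * Sub | (p.1 == ord0) && ((p.2 < c) || conn T c p.2)].

Lemma mem_conn_rel_ext (x y : Sub) : ((x, y) \in conn_rel_ext) =
  ((x <= y) && conn T x y) || ((x == ord0) && ((y < c) || conn T c y)).
Proof. by rewrite !inE. Qed.

Lemma conn_rel_ext_transfer : is_transfer conn_rel_ext.
Proof.
apply/transferP; split => [K H|K|K H L|K H L]; rewrite ?mem_conn_rel_ext.
- by case/orP => /andP[// /eqP -> _].
- by rewrite leqnn connect0.
- case/orP => [/andP[KH cKH]|/andP[/eqP K0 hH]];
    case/orP => [/andP[HL cHL]|/andP[/eqP H0 hL]].
  + by rewrite (leq_trans KH HL) (connect_trans cKH cHL).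
  + have -> : K = ord0 by apply: val_inj => /=; rewrite H0 /= in KH; lia.
    by rewrite eqxx hL orbT.
  + rewrite K0 eqxx /=; apply/orP; right.
    case/orP: hH => [Hc|cH]; last by rewrite (connect_trans cH cHL) orbT.
    case: (ltnP L c) => // cL; move: nconn_c; apply: contraNT => _.
    exact: (@conn_convex _ _ trT ord0 L c (leq0n _) cL (connect_trans (conn_lt_c Hc) cHL)).
  + by rewrite K0 eqxx hL orbT.
- case/orP => [/andP[KH cKH]|/andP[/eqP K0 hH]] KL LH.
    by rewrite KL (conn_convex trT KL LH cKH).
  rewrite K0 eqxx /=; apply/orP; right.
  case: (ltnP L c) => // cL.
  case/orP: hH => [Hc|cH]; first lia.
  by rewrite (conn_convex trT cL LH cH) orbT.
Qed.

Lemma conn_rel_sub_ext : conn_rel T \subset conn_rel_ext.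
Proof. exact: subsetUl. Qed.

Lemma compatible_conn_rel_ext : compatible T conn_rel_ext.
Proof.
have sub := subset_trans (sub_conn_rel trT) conn_rel_sub_ext.
apply: compatible_intro conn_rel_ext_transfer sub _ => A B C BC CA BAT.
apply: (subsetP conn_rel_sub_ext); rewrite inE /= CA /=.
have cBA := conn_edge BAT; have cBC := conn_convex trT BC CA cBA.
by apply: connect_trans cBA; rewrite conn_sym.
Qed.

Lemma conn_rel_ext_not_hull : ~ is_hull T conn_rel_ext.
Proof.
case/hullP => _ _ _ /(_ _ (conn_rel_transfer trT) (conn_rel_saturated trT) (sub_conn_rel trT)).
move/subsetP/(_ (ord0, c)); rewrite mem_conn_rel_ext eqxx connect0 !orbT inE /=.
by move=> /(_ isT); apply/negP.
Qed.

Lemma criterion_of_conn_rel_ext_Tc : 0 < n -> conn_rel_ext = Tc n -> lsp_criterion T.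
Proof.
move=> n_gt0 ext_Tc.
have in_ext (x y : Sub) : x <= y -> (x, y) \in conn_rel_ext by rewrite ext_Tc inE.
have nconn0max : ~~ conn T ord0 ord_max.
  by apply: contra nconn_c; apply: (@conn_convex _ _ trT ord0 ord_max c (leq0n _) (leq_ord _)).
have nconn01 : ~~ conn T ord0 (sub1 n).
  apply: contra nconn0max => c01; apply: connect_trans c01 _.
  have := in_ext (sub1 n) ord_max (leq_ord _).
  by rewrite mem_conn_rel_ext -val_eqE /= val_sub1 // => /orP[/andP[]|].
have iso0 y : conn T ord0 y -> y = ord0.
  move=> c0y; apply: val_inj => /=; apply/eqP; rewrite -leqn0 leqNgt.
  apply: contra nconn01 => y_gt0; apply: (@conn_convex _ _ trT ord0 y) (leq0n _) _ c0y.
  by rewrite val_sub1.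
have c1 : c = 1 :> nat.
  have c_le1 : c <= 1.
    by move: nconn01; apply: contraNT; rewrite -ltnNge -(val_sub1 n_gt0); apply: conn_lt_c.
  have c_gt0 : 0 < c.
    rewrite lt0n; apply: contraNneq nconn_c => c0.
    by rewrite (_ : c = ord0) ?connect0 //; apply: val_inj.
  lia.
right; split => //.
have := in_ext ord0 ord_max (leq0n _).
rewrite mem_conn_rel_ext (negbTE nconn0max) andbF eqxx /= => /orP[|c_max].
  by rewrite c1 /=; lia.
by rewrite (_ : sub1 n = c) //; apply: val_inj; rewrite /= c1 val_sub1.
Qed.

End ExtensionFromTrivial.

Lemma criterion_of_lsp n (T : {set 'I_n.+1 * 'I_n.+1}) : 0 < n -> is_transfer T ->
  lesser_simply_paired T -> lsp_criterion T.
Proof.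
move=> n_gt0 trT lsp.
case: (boolP (connect (und_edge T) ord0 ord_max)) => [|nconn]; first by left.
case: (@arg_minnP _ ord_max (fun k => ~~ connect (und_edge T) ord0 k) (@nat_of_ord _) nconn)
  => c nconn_c c_min.
have conn_lt_c (j : 'I_n.+1) : j < c -> connect (und_edge T) ord0 j.
  by move=> jc; apply/negPn/negP => /c_min; lia.
have trE := conn_rel_ext_transfer trT conn_lt_c nconn_c.
have TE := subset_trans (sub_conn_rel trT) (conn_rel_sub_ext T c).
have cE := compatible_conn_rel_ext trT conn_lt_c nconn_c.
have [/(conn_rel_ext_not_hull trT nconn_c) //|] := ((lesser_simply_pairedP T).1 lsp _ trE TE).1 cE.
exact: criterion_of_conn_rel_ext_Tc trT conn_lt_c nconn_c n_gt0.
Qed.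

Section Components.
Variable n : nat.
Local Notation Sub := 'I_n.+1.
Local Notation Rel := {set Sub * Sub}.
Variable T : Rel.
Hypothesis trT : is_transfer T.
Local Notation conn := (connect (und_edge T)).
Local Notation components := [set component T x | x : Sub].

Lemma component_eq (x y : Sub) : conn x y -> component T x = component T y.
Proof.
move=> xy; apply/setP => z; rewrite !inE; apply/idP/idP; last exact: connect_trans.
by apply: connect_trans; rewrite conn_sym.
Qed.

Lemma component_neq (x y : Sub) : ~~ conn x y -> component T x != component T y.
Proof.
apply: contraNneq => comp_xy; have : y \in component T y by rewrite inE connect0.
by rewrite -comp_xy inE.
Qed.

Lemma component_in_components (x : Sub) : component T x \in components.
Proof. exact: imset_f. Qed.

Lemma num_components_eq1 : num_components T = 1 <-> conn ord0 ord_max.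
Proof.
split => [/eqP/cards1P[S0 comps] | c0max].
  have in_S0 x : component T x = S0 by apply/set1P; rewrite -comps component_in_components.
  have : ord_max \in component T ord_max by rewrite inE connect0.
  by rewrite (in_S0 ord_max) -(in_S0 ord0) inE.
rewrite /num_components (_ : components = [set component T ord0]) ?cards1 //.
  apply/setP => S; rewrite inE; apply/imsetP/eqP => [[x _ ->]|->]; last by exists ord0.
  by apply/esym/component_eq/(@conn_convex _ _ trT ord0 ord_max x (leq0n _) (leq_ord _)).
Qed.

Lemma component_set1P (x : Sub) : component T x = [set x] <-> (forall y, conn x y -> y = x).
Proof.
split => [comp_x y | iso_x]; first by move=> xy; apply/set1P; rewrite -comp_x inE.
by apply/setP => y; rewrite !inE; apply/idP/eqP => [/iso_x | ->] //; apply: connect0.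
Qed.

Lemma num_components_eq2 : 0 < n -> (forall y, conn ord0 y -> y = ord0) ->
  num_components T = 2 <-> conn (sub1 n) ord_max.
Proof.
move=> n_gt0 iso0.
have n01 : ~~ conn ord0 (sub1 n).
  by apply/negP => /iso0 /(congr1 (@nat_of_ord _)); rewrite val_sub1.
split => [comps2 | c1max].
  apply/negPn/negP => n1max.
  have n0max : ~~ conn ord0 ord_max.
    by apply/negP => /iso0 /(congr1 (@nat_of_ord _)) /= n0; move: n_gt0; rewrite n0.
  have : #|component T ord0 |: (component T (sub1 n) |: [set component T ord_max])| <= 2.
    rewrite -comps2; apply: subset_leq_card; apply/subsetP => S.
    by rewrite !inE => /or3P[] /eqP ->; apply: component_in_components.
  by rewrite !cardsU1 cards1 !inE !(negbTE (component_neq _)).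
rewrite /num_components (_ : components = [set component T ord0; component T (sub1 n)]).
  by rewrite cards2 component_neq.
  apply/setP => S; rewrite !inE; apply/imsetP/orP => [[x _ ->]|[] /eqP ->]; last 2 first.
  - by exists ord0.
  - by exists (sub1 n).
  have [x0|x_gt0] := posnP x; first by left; rewrite (_ : x = ord0) //; apply: val_inj.
  right; apply/eqP/esym/component_eq.
by apply: (@conn_convex _ _ trT (sub1 n) ord_max) c1max; rewrite ?val_sub1 ?leq_ord.
Qed.

End Components.

Lemma criterion_iff_components n (T : {set 'I_n.+1 * 'I_n.+1}) : 0 < n -> is_transfer T ->
  (lsp_criterion T <-> (num_components T = 1 \/
     (num_components T = 2 /\ component T (trivial_sub n) = [set trivial_sub n]))).
Proof.
move=> n_gt0 trT; rewrite /trivial_sub component_set1P num_components_eq1 //.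
split => [[c0max|[iso0 c1max]] | [c0max|[comps2 iso0]]]; [by left | right | by left | right].
  by split => //; apply/(num_components_eq2 trT n_gt0 iso0).
by split => //; apply/(num_components_eq2 trT n_gt0 iso0).
Qed.

(** * Counting *)

Section Encoding.
Variable n : nat.
Local Notation Sub := 'I_n.+1.
Local Notation Rel := {set Sub * Sub}.

Definition max_target (T : Rel) (i : Sub) : nat := \max_(j : Sub | (i, j) \in T) j.

Definition encode (T : Rel) : seq nat := mkseq (fun k => max_target T (inord k)) n.+1.

Definition decode (s : seq nat) : Rel :=
  [set p : Sub * Sub | (p.1 <= p.2) && (p.2 <= nth 0 s p.1)].

Lemma max_target_le (T : Rel) i : max_target T i <= n.
Proof. by apply/bigmax_leqP => j _; rewrite -ltnS. Qed.

Lemma mem_transfer_max_target (T : Rel) (i j : Sub) : is_transfer T ->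
  ((i, j) \in T) = (i <= j) && (j <= max_target T i).
Proof.
move=> /transferP[t1 t2 _ t4]; apply/idP/idP => [ijT | /andP[ij j_le]].
  by rewrite t1 //=; apply: (leq_bigmax_cond j ijT).
have : 0 < #|fun j => (i, j) \in T| by apply/card_gt0P; exists i; apply: t2.
case/(eq_bigmax_cond (@nat_of_ord _)) => k ikT max_k.
by apply: t4 ikT ij _; rewrite -max_k.
Qed.

Lemma nth_encode (T : Rel) k : k < n.+1 -> nth 0 (encode T) k = max_target T (inord k).
Proof. by move=> kn; rewrite nth_mkseq. Qed.

Lemma encode_nested (T : Rel) : is_transfer T -> nested n.+1 (encode T).
Proof.
move=> trT; have [_ t2 t3 _] := iffLR (transferP T) trT.
split=> [|i i_lt|i j i_lt ij]; first by rewrite size_mkseq.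
  move: (t2 (inord i)); rewrite mem_transfer_max_target // inordK // leqnn nth_encode //=.
  by rewrite ltnS max_target_le andbT.
rewrite (nth_encode T i_lt) => j_le.
have j_lt : j < n.+1 by rewrite ltnS (leq_trans j_le (max_target_le _ _)).
have ijT : (inord i, inord j) \in T by rewrite mem_transfer_max_target // !inordK // ij.
rewrite nth_encode //; apply/bigmax_leqP => k jkT.
by move: (t3 _ _ _ ijT jkT); rewrite mem_transfer_max_target // => /andP[].
Qed.

Lemma decode_transfer s : nested n.+1 s -> is_transfer (decode s).
Proof.
case=> _ s_range s_nest; apply/transferP; split => [K H|K|K H L|K H L]; rewrite ?inE /=.
- by case/andP.
- by rewrite leqnn; case/andP: (s_range K (ltn_ord K)).
- case/andP => KH HK /andP[HL LH]; rewrite (leq_trans KH HL).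
  exact: leq_trans LH (s_nest _ _ (ltn_ord K) KH HK).
- by case/andP => KH HK KL LH; rewrite KL (leq_trans LH HK).
Qed.

Lemma encodeK s : nested n.+1 s -> encode (decode s) = s.
Proof.
case=> size_s s_range _; apply: (@eq_from_nth _ 0); first by rewrite size_mkseq size_s.
move=> k; rewrite size_mkseq => k_lt; rewrite nth_encode //.
apply/eqP; rewrite eqn_leq; apply/andP; split.
  by apply/bigmax_leqP => j; rewrite inE /= inordK // => /andP[].
have /andP[k_le sk_lt] := s_range k k_lt.
have := @leq_bigmax_cond _ (fun j => (inord k, j) \in decode s) (@nat_of_ord _)
  (inord (nth 0 s k)).
by rewrite inE /= !inordK // k_le leqnn; apply.
Qed.

Lemma decodeK (T : Rel) : is_transfer T -> decode (encode T) = T.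
Proof.
move=> trT; apply/setP => -[x y].
by rewrite inE /= nth_encode // inord_val mem_transfer_max_target.
Qed.

Lemma card_transfer_encode (Q : pred (seq nat)) :
  #|[set T : Rel | is_transfer T && Q (encode T)]| = count Q (nested_seqs n.+1).
Proof.
rewrite cardE -size_filter; set E := enum _.
have E_uniq : uniq (map encode E).
  rewrite map_inj_in_uniq ?enum_uniq // => T1 T2.
  rewrite !mem_enum !inE => /andP[tr1 _] /andP[tr2 _] eq12.
  by rewrite -(decodeK tr1) -(decodeK tr2) eq12.
suff /perm_size <- : perm_eq (map encode E) [seq s <- nested_seqs n.+1 | Q s].
  by rewrite size_map.
apply: uniq_perm => //; first by rewrite filter_uniq // nested_seqs_uniq.
move=> s; apply/mapP/idP => [[T] | ].
  rewrite mem_enum inE => /andP[trT QT] ->.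
  by rewrite mem_filter QT; apply/mem_nested_seqs/encode_nested.
rewrite mem_filter => /andP[Qs /mem_nested_seqs s_nested].
exists (decode s); last by rewrite encodeK.
by rewrite mem_enum inE decode_transfer //= encodeK.
Qed.

Definition lsp_code (t : seq nat) : bool :=
  (nth 0 t 0 == n) || ((nth 0 t 0 == 0) && (nth 0 t 1 == n)).

Lemma criterion_iff_code (T : Rel) : 0 < n -> is_transfer T ->
  lsp_criterion T <-> lsp_code (encode T).
Proof.
move=> n_gt0 trT; rewrite /lsp_code !nth_encode ?ltnS //.
rewrite (_ : inord 0 = ord0); last by apply: val_inj; rewrite /= inordK.
have to_max i : (max_target T i == n) = ((i, ord_max) \in T).
  by rewrite mem_transfer_max_target //= leq_ord eqn_leq max_target_le.
have iso0 : max_target T ord0 == 0 <-> (forall y, connect (und_edge T) ord0 y -> y = ord0).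
  split => [/eqP max0 y c0y | iso0].
    have := @mem_transfer_conn_min _ _ trT ord0 y (fun v _ => leq0n v) c0y.
    by rewrite mem_transfer_max_target // max0 leqn0 => /andP[_ /eqP y0]; apply: val_inj.
  have : (ord0, inord (max_target T ord0)) \in T.
    by rewrite mem_transfer_max_target //= inordK // ltnS max_target_le.
  by move/conn_edge/iso0/(congr1 (@nat_of_ord _)); rewrite /= inordK ?ltnS ?max_target_le // => ->.
rewrite !to_max -/(sub1 n); split => [[c0max|[iso c1max]] | /orP[T0max|/andP[/iso0 iso T1max]]].
- by rewrite (@mem_transfer_conn_min _ _ trT ord0 _ (fun v _ => leq0n v) c0max).
- rewrite (mem_transfer_conn_min trT (sub1_conn_min n_gt0 iso) c1max) andbT.
  by apply/orP; right; apply/iso0.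
- by left; apply: conn_edge.
- by right; split => //; apply: conn_edge.
Qed.

End Encoding.

Lemma head_in_heads N s : nested N s -> N \in heads s.
Proof.
case: N => [|N] [size_s s_range _]; first by rewrite inE.
rewrite inE; apply/orP; right; apply/mapP; exists N => //.
rewrite mem_filter mem_iota size_s leqnn !andbT.
by apply/is_cutP => y y_le; have := s_range y; lia.
Qed.

Lemma count_head_eq N : count (fun t => nth 0 t 0 == N) (nested_seqs N.+1) = size (nested_seqs N).
Proof.
rewrite nested_seqsS count_flatten -map_comp -[RHS]count_predT -sumn_count; congr sumn.
apply/eq_in_map => s /mem_nested_seqs s_nested; rewrite /comp count_map.
by rewrite (@eq_count _ _ (pred1 N)) // count_uniq_mem ?heads_uniq ?head_in_heads.
Qed.

Lemma count_head0_second_eq N :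
  count (fun t => (nth 0 t 0 == 0) && (nth 0 t 1 == N.+1)) (nested_seqs N.+2) =
  size (nested_seqs N).
Proof.
rewrite -count_head_eq nested_seqsS count_flatten -map_comp -[RHS]sumn_count; congr sumn.
apply/eq_in_map => s /mem_nested_seqs [size_s _ _] /=.
rewrite (nth_map 0) ?size_s // eqSS !count_map (@eq_count _ _ pred0) ?count_pred0 ?addn0 //.
Qed.

Lemma count_lsp_code N :
  count (lsp_code N.+1) (nested_seqs N.+2) = size (nested_seqs N.+1) + size (nested_seqs N).
Proof.
rewrite -count_head_eq -count_head0_second_eq -count_predU_disj => [|t]; last first.
  by rewrite /=; case: eqP => // ->.
exact: eq_count.
Qed.

Lemma lsp_iff_criterion n (T : {set 'I_n.+1 * 'I_n.+1}) : 0 < n -> is_transfer T ->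
  lesser_simply_paired T <-> lsp_criterion T.
Proof. by move=> n_gt0 trT; split; [exact: criterion_of_lsp | exact: lsp_of_criterion]. Qed.

Lemma card_transfer n : #|[set T : {set 'I_n.+1 * 'I_n.+1} | is_transfer T]| = Cat n.+1.
Proof.
rewrite (@eq_card _ _ [set T | is_transfer T && predT (encode T)]).
  by rewrite card_transfer_encode count_predT size_nested_seqs.
by move=> T; rewrite !inE andbT.
Qed.

Lemma card_lsp n : 0 < n ->
  #|[set T : {set 'I_n.+1 * 'I_n.+1} | is_transfer T && lesser_simply_paired T]| =
  Cat n + Cat n.-1.
Proof.
move=> n_gt0; rewrite (@eq_card _ _ [set T | is_transfer T && lsp_code n (encode T)]).
  rewrite card_transfer_encode; case: n n_gt0 => // m _.
  by rewrite count_lsp_code !size_nested_seqs.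
move=> T; rewrite !inE; apply: andb_id2l => trT.
have lsp_crit := lsp_iff_criterion n_gt0 trT; have crit_code := criterion_iff_code n_gt0 trT.
by apply/idP/idP => [/lsp_crit/crit_code | /crit_code/lsp_crit].
Qed.

(** * Catalan numbers *)

Lemma Cat_fact a : Cat a * ((a.+1)`! * a`!) = (a.*2)`!.
Proof. by rewrite -size_nested_seqs size_nested_seqs_fact. Qed.

Lemma Cat_gt0 a : 0 < Cat a.
Proof. by rewrite lt0n; apply/eqP => Cat0; have := fact_gt0 a.*2; rewrite -Cat_fact Cat0. Qed.

Lemma CatS a : Cat a.+1 * a.+2 = 2 * (a.*2).+1 * Cat a.
Proof.
have := Cat_fact a.+1; rewrite doubleS !factS -(Cat_fact a) => fact_eq.
have pos : 0 < a.+1 * (a.+1 * (a`! * a`!)) by rewrite !muln_gt0 fact_gt0.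
apply/eqP; rewrite -(eqn_pmul2r pos); apply/eqP.
have -> : Cat a.+1 * a.+2 * (a.+1 * (a.+1 * (a`! * a`!))) =
  Cat a.+1 * (a.+2 * (a.+1 * a`!) * (a.+1 * a`!)) by ring.
by rewrite fact_eq factS -!muln2; ring.
Qed.

Lemma Cat_add_pred a :
  Cat a.+1 + Cat a = ((5 * a.+1 - 1) * (a.*2)`!) %/ (a`! * (a.+2)`!).
Proof.
have -> : (5 * a.+1 - 1) * (a.*2)`! = (Cat a.+1 + Cat a) * (a`! * (a.+2)`!).
  rewrite -Cat_fact (_ : 5 * a.+1 - 1 = 5 * a + 4); last lia.
  have := CatS a; rewrite !factS -!muln2 => rec.
  have -> : (Cat a.+1 + Cat a) * (a`! * (a.+2 * (a.+1 * a`!))) =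
    (Cat a.+1 * a.+2 + Cat a * a.+2) * (a.+1 * a`! * a`!) by ring.
  by rewrite rec; ring.
by rewrite mulnK // muln_gt0 !fact_gt0.
Qed.

Lemma Cat_add_pred_ratio a :
  (Cat a.+1 + Cat a) * (16 * a.+1 ^ 2 - 4) = (5 * a.+1 ^ 2 + 9 * a.+1 - 2) * Cat a.+2.
Proof.
have := CatS a; have := CatS a.+1; rewrite -!muln2 => rec1 rec0.
rewrite (_ : 5 * a.+1 ^ 2 + 9 * a.+1 - 2 = (5 * a + 4) * (a + 3)); last nia.
rewrite (_ : 16 * a.+1 ^ 2 - 4 = 4 * (2 * a + 1) * (2 * a + 3)); last nia.
nia.
Qed.

Import GRing.Theory Num.Theory.

Theorem mainTheorem17 (p n : nat) : prime p -> 0 < n ->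
  (forall T : {set 'I_n.+1 * 'I_n.+1}, is_transfer T ->
     (lesser_simply_paired T <->
        (num_components T = 1 \/
         (num_components T = 2 /\ component T (trivial_sub n) = [set trivial_sub n]))))
  /\ #|[set T : {set 'I_n.+1 * 'I_n.+1} | is_transfer T && lesser_simply_paired T]|
       = Cat n + Cat n.-1
  /\ Cat n + Cat n.-1 = ((5 * n - 1) * (n.-1.*2)`!) %/ ((n.-1)`! * (n.+1)`!)
  /\ ((#|[set T : {set 'I_n.+1 * 'I_n.+1} | is_transfer T && lesser_simply_paired T]|%:R
        / #|[set T : {set 'I_n.+1 * 'I_n.+1} | is_transfer T]|%:R)%R : rat)
       = ((5 * n ^ 2 + 9 * n - 2)%N%:R / (16 * n ^ 2 - 4)%N%:R)%R.
Proof.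
move=> _ n_gt0; split=> [T trT|].
  by rewrite lsp_iff_criterion // criterion_iff_components.
rewrite card_lsp // card_transfer; case: n n_gt0 => // m _.
split=> //; split; first exact: Cat_add_pred.
apply/eqP; rewrite eqr_div ?pnatr_eq0 -?lt0n ?Cat_gt0 //; last nia.
by rewrite -!natrM eqr_nat Cat_add_pred_ratio.
Qed.
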